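(* Let $n\geq 3$ and let $L^B$ be a blow-up of the Boolean lattice $L\cong\mathbf{2}^n$. Then $G^c(L^B)_{SR}$ is connected and $\operatorname{diam}(G^c(L^B)_{SR})\leq 3$.
   Context: Blow-up: keep $0,1$ of $L=\mathbf{2}^n$ and replace every $x\in L\setminus\{0,1\}$ by a finite nonempty chain $C_x$, ordered by the chain order within $C_x$ and, for $a\in C_x,b\in C_y$, $x\neq y$, by $a\leq b$ iff $x\leq y$ in $L$; $0$ least, $1$ greatest. $Z^*(M)$ is the set of nonzero $a$ with $a\wedge b=0$ for some $b\neq0$; $G^c(M)$ has vertex set $Z^*(M)$, distinct $a,b$ adjacent iff $a\wedge b\neq 0$. In a connected graph, $u$ is maximally distant from $v$ if $d(v,w)\leq d(u,v)$ for all neighbours $w$ of $u$; mutually maximally distant means each is maximally distant from the other. $G_{SR}$ has as vertices those $u$ mutually maximally distant from some $v$, distinct vertices adjacent iff mutually maximally distant in $G$. *)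

From mathcomp Require Import all_boot.
Set Implicit Arguments. Unset Strict Implicit. Unset Printing Implicit Defensive.

Inductive walk (V : Type) (adj : V -> V -> Prop) : V -> V -> nat -> Prop :=
| walk0 u : walk adj u u 0
| walkS u w v m : adj u w -> walk adj w v m -> walk adj u v m.+1.

Definition is_dist (V : Type) (adj : V -> V -> Prop) (u v : V) (m : nat) : Prop :=
  walk adj u v m /\ forall m', walk adj u v m' -> m <= m'.

Definition mmd (V : Type) (adj : V -> V -> Prop) (u v : V) : Prop :=
  exists m, is_dist adj u v m /\
    (forall w m', adj u w -> is_dist adj v w m' -> m' <= m) /\
    (forall w m', adj v w -> is_dist adj u w m' -> m' <= m).

Definition SR_vertex (V : Type) (vert : V -> Prop) (adj : V -> V -> Prop) (u : V) : Prop :=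
  vert u /\ exists v, vert v /\ mmd adj u v.

Definition SR_adj (V : Type) (vert : V -> Prop) (adj : V -> V -> Prop) (u v : V) : Prop :=
  SR_vertex vert adj u /\ SR_vertex vert adj v /\ u <> v /\ mmd adj u v.

Definition connected_diam_le (V : Type) (vert : V -> Prop) (adj : V -> V -> Prop) (D : nat) : Prop :=
  (exists u, vert u) /\
  forall u v, vert u -> vert v -> exists2 m, m <= D & walk adj u v m.

(* Bot = 0, Top = 1, Mid x i = the i-th element (from the bottom) of the chain C_x;
   k x is the length of the chain C_x (every finite nonempty chain is 'I_(k x)). *)
Inductive blow (n : nat) : Type :=
| Bot : blow n
| Top : blow n
| Mid : {set 'I_n} -> nat -> blow n.
Arguments Bot {n}. Arguments Top {n}.

Definition bvalid n (k : {set 'I_n} -> nat) (a : blow n) : Prop :=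
  match a with
  | Mid x i => [/\ x != set0, x != setT & i < k x]
  | _ => True
  end.

Definition ble n (a b : blow n) : Prop :=
  match a, b with
  | Bot, _ => True
  | _, Top => True
  | Mid x i, Mid y j => (x = y /\ i <= j) \/ (x <> y /\ x \subset y)
  | _, _ => False
  end.

(* a /\ b = 0 in L^B: 0 is the greatest lower bound, i.e. every common lower bound is 0 *)
Definition meet_zero n (k : {set 'I_n} -> nat) (a b : blow n) : Prop :=
  forall c, bvalid k c -> ble c a -> ble c b -> c = Bot.

Definition Zstar n (k : {set 'I_n} -> nat) (a : blow n) : Prop :=
  bvalid k a /\ a <> Bot /\ exists b, bvalid k b /\ b <> Bot /\ meet_zero k a b.

Definition Gc_adj n (k : {set 'I_n} -> nat) (a b : blow n) : Prop :=
  Zstar k a /\ Zstar k b /\ a <> b /\ ~ meet_zero k a b.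

From mathcomp Require Import all_boot.
Set Implicit Arguments. Unset Strict Implicit. Unset Printing Implicit Defensive.

(* The nonzero zero-divisors of L^B are exactly the elements of the chains
   C_x, and two of them are adjacent in G^c iff their underlying sets x, y
   meet.  As n >= 3, disjoint x and y are joined through a two-element set
   {a, b}, so G^c has diameter at most 2.  Hence elements over disjoint sets are at
   distance exactly 2 and thus mutually maximally distant, and so are two
   elements of the same chain, which are adjacent closed twins.  In G_SR
   every element of C_x is therefore adjacent to every element over a set
   disjoint from x, which yields the walks x, ~(x | y), y and, when
   x | y = 1, x, ~x, ~y, y. *)

Section Walks.

Variables (V : Type) (adj : V -> V -> Prop).

Lemma walk0_eq u v : walk adj u v 0 -> u = v.
Proof. by inversion 1. Qed.

Lemma walk1_adj u v : walk adj u v 1 -> adj u v.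
Proof.
by move=> W; inversion W as [|? w ? ? uw wv]; subst; rewrite -(walk0_eq wv).
Qed.

Lemma walk1 u v : adj u v -> walk adj u v 1.
Proof. by move=> uv; apply: walkS uv (walk0 _ _). Qed.

Lemma is_dist_le u v m p : is_dist adj u v m -> walk adj u v p -> m <= p.
Proof. by case=> _; apply. Qed.

Lemma mmd_of_diam (vert : V -> Prop) D u v :
  (forall a b, vert a -> vert b -> exists2 p, p <= D & walk adj a b p) ->
  (forall a b, adj a b -> vert b) ->
  vert u -> vert v -> is_dist adj u v D -> mmd adj u v.
Proof.
move=> diam adj_vert vu vv duv; exists D.
have far a w m : vert a -> vert w -> is_dist adj a w m -> m <= D.
  move=> va vw daw; have [p pD aw] := diam a w va vw.
  exact: leq_trans (is_dist_le daw aw) pD.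
split=> //; split=> w m uw dw; apply: far dw => //; exact: adj_vert uw.
Qed.

Lemma mmd_twins u v : u <> v -> adj u v ->
  (forall w, adj u w -> w = v \/ adj v w) ->
  (forall w, adj v w -> w = u \/ adj u w) -> mmd adj u v.
Proof.
move=> neq uv Nu Nv.
have near a b w m : (forall w, adj a w -> w = b \/ adj b w) ->
    adj a w -> is_dist adj b w m -> m <= 1.
  move=> Na aw; case: (Na w aw) => [-> | bw] dbw.
  - exact: leq_trans (is_dist_le dbw (walk0 _ _)) _.
  - exact: is_dist_le dbw (walk1 bw).
exists 1; split; first split.
- exact: walk1.
- by case=> // /walk0_eq.
by split=> w m; apply: near.
Qed.

End Walks.

Lemma setC_eq0 (T : finType) (A : {set T}) : (~: A == set0) = (A == setT).
Proof. by rewrite -setCT (inj_eq (@setC_inj _)). Qed.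

Lemma setC_eqT (T : finType) (A : {set T}) : (~: A == setT) = (A == set0).
Proof. by rewrite -setC0 (inj_eq (@setC_inj _)). Qed.

Section BlowUp.

Variables (n : nat) (k : {set 'I_n} -> nat).
Hypothesis k_gt0 : forall x : {set 'I_n}, x != set0 -> x != setT -> 0 < k x.

Local Notation SR_vert := (SR_vertex (Zstar k) (Gc_adj k)).
Local Notation SR_edge := (SR_adj (Zstar k) (Gc_adj k)).

Lemma ble_refl (a : blow n) : ble a a.
Proof. by case: a => //= x i; left. Qed.

Lemma ble_Top (a : blow n) : ble a Top.
Proof. by case: a. Qed.

Lemma ble_Mid_subset (z x : {set 'I_n}) l i : ble (Mid z l) (Mid x i) -> z \subset x.
Proof. by case=> [[-> _] | [_ ->]]. Qed.

Lemma ble_Mid0 (z x : {set 'I_n}) i : z \subset x -> ble (Mid z 0) (Mid x i).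
Proof. by move=> zx; have [-> | /eqP] := eqVneq z x; [left | right]. Qed.

Lemma Mid_eq_or_neq (x y : {set 'I_n}) i j : Mid x i = Mid y j \/ Mid x i <> Mid y j.
Proof.
have [<- | nxy] := eqVneq x y; last by right; case=> /eqP; rewrite (negbTE nxy).
have [<- | nij] := eqVneq i j; first by left.
by right; case=> /eqP; rewrite (negbTE nij).
Qed.

Lemma valid_Mid0 x : x != set0 -> x != setT -> bvalid k (Mid x 0).
Proof. by move=> x0 xT; split=> //; apply: k_gt0. Qed.

Lemma valid_setC x i : bvalid k (Mid x i) -> bvalid k (Mid (~: x) 0).
Proof. by case=> x0 xT _; apply: valid_Mid0; rewrite ?setC_eq0 ?setC_eqT. Qed.

Lemma Mid_neq_disjoint x i y j : bvalid k (Mid x i) -> x :&: y = set0 ->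
  Mid x i <> Mid y j.
Proof.
case=> x0 _ _ xy0 [yE _]; rewrite -yE setIid in xy0.
by rewrite xy0 eqxx in x0.
Qed.

Lemma meet_zero_Mid x i y j : x != setT ->
  meet_zero k (Mid x i) (Mid y j) <-> x :&: y = set0.
Proof.
move=> xT; split=> [mz | xy0].
- apply/eqP; apply: contraT => xy_n0.
  have xyT : x :&: y != setT.
    by apply: contraNneq xT => xyT; rewrite -subTset -xyT subsetIl.
  suff : Mid (x :&: y) 0 = Bot by [].
  apply: mz (valid_Mid0 xy_n0 xyT) _ _; apply: ble_Mid0.
  - exact: subsetIl.
  - exact: subsetIr.
- case=> [||z l] // [/set0Pn [a az] _ _].
  move=> /ble_Mid_subset/subsetP zx /ble_Mid_subset/subsetP zy.
  by have := in_set0 a; rewrite -xy0 inE zx ?zy.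
Qed.

Lemma Zstar_Mid a : Zstar k a -> exists x i, a = Mid x i /\ bvalid k (Mid x i).
Proof.
case: a => [[_ []] // | [_ [_ [b [vb [b0 mz]]]]] | x i [vx _]]; last by exists x, i.
by case: b0; apply: mz => //; [apply: ble_Top | apply: ble_refl].
Qed.

Lemma Zstar_valid x i : bvalid k (Mid x i) -> Zstar k (Mid x i).
Proof.
move=> vx; split=> //; split=> //; exists (Mid (~: x) 0).
split; first exact: valid_setC vx.
by split=> //; apply/meet_zero_Mid; [case: vx | exact: setICr].
Qed.

Lemma Gc_adj_MidP x i y j :
  Gc_adj k (Mid x i) (Mid y j) <->
  [/\ bvalid k (Mid x i), bvalid k (Mid y j), Mid x i <> Mid y j & x :&: y != set0].
Proof.
split=> [[[vx _] [[vy _] [neq not_mz]]] | [vx vy neq xy_n0]].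
- split=> //; apply/eqP => xy0; apply: not_mz; apply/meet_zero_Mid => //.
  by case: vx.
- do 2 (split; first exact: Zstar_valid); split=> // mz.
  case: vx => _ xT _; move/(meet_zero_Mid _ _ _ xT): mz => xy0.
  by rewrite xy0 eqxx in xy_n0.
Qed.

Lemma Gc_adj_Mid x i w : Gc_adj k (Mid x i) w ->
  exists z l, w = Mid z l /\ Gc_adj k (Mid x i) (Mid z l).
Proof.
by move=> xw; have [z [l [wE _]]] := Zstar_Mid xw.2.1; exists z, l; rewrite -wE.
Qed.

Lemma mmd_same_chain x i j : bvalid k (Mid x i) -> bvalid k (Mid x j) -> i != j ->
  mmd (Gc_adj k) (Mid x i) (Mid x j).
Proof.
move=> vi vj /eqP nij.
have neq l m : l <> m -> Mid x l <> Mid x m by move=> nlm [].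
have twin l m : bvalid k (Mid x m) ->
    forall w, Gc_adj k (Mid x l) w -> w = Mid x m \/ Gc_adj k (Mid x m) w.
  move=> vm w /Gc_adj_Mid [z [p [-> /Gc_adj_MidP [_ vz _ xz]]]].
  have [<- | ne] := Mid_eq_or_neq x z m p; [by left | by right; apply/Gc_adj_MidP].
have x_n0 : x :&: x != set0 by rewrite setIid; case: vi.
apply: mmd_twins; [exact: neq | | exact: twin _ _ vj | exact: twin _ _ vi].
by apply/Gc_adj_MidP; split=> //; exact: neq.
Qed.

Hypothesis n_gt2 : 2 < n.

Lemma small_set_neqT (x : {set 'I_n}) : #|x| < n -> x != setT.
Proof. by apply: contraTneq => ->; rewrite cardsT card_ord ltnn. Qed.

Lemma Gc_walk2_disjoint x i y j : bvalid k (Mid x i) -> bvalid k (Mid y j) ->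
  x :&: y = set0 -> walk (Gc_adj k) (Mid x i) (Mid y j) 2.
Proof.
move=> vx vy xy0.
have [a xa] : exists a, a \in x by apply/set0Pn; case: vx.
have [b yb] : exists b, b \in y by apply/set0Pn; case: vy.
have disj c : c \in x -> c \in y -> False.
  by move=> cx cy; have := in_set0 c; rewrite -xy0 inE cx cy.
have vab : bvalid k (Mid [set a; b] 0).
  apply: valid_Mid0; first by apply/set0Pn; exists a; rewrite !inE eqxx.
  by apply: small_set_neqT; rewrite cards2 (leq_trans _ n_gt2) //; case: (a != b).
apply: (walkS (w := Mid [set a; b] 0)); last apply: walk1; apply/Gc_adj_MidP; split=> //.
- by case=> xE _; apply: (disj b) => //; rewrite xE !inE eqxx orbT.
- by apply/set0Pn; exists a; rewrite !inE xa eqxx.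
- by case=> yE _; apply: (disj a) => //; rewrite -yE !inE eqxx.
- by apply/set0Pn; exists b; rewrite !inE yb eqxx orbT.
Qed.

Lemma Gc_diam_le2 u v : Zstar k u -> Zstar k v ->
  exists2 m, m <= 2 & walk (Gc_adj k) u v m.
Proof.
move=> /Zstar_Mid [x [i [-> vx]]] /Zstar_Mid [y [j [-> vy]]].
have [xy0 | xy_n0] := eqVneq (x :&: y) set0.
  by exists 2; last exact: Gc_walk2_disjoint.
have [<- | neq] := Mid_eq_or_neq x y i j; first by exists 0; last exact: walk0.
by exists 1; last by apply/walk1/Gc_adj_MidP.
Qed.

Lemma mmd_disjoint x i y j : bvalid k (Mid x i) -> bvalid k (Mid y j) ->
  x :&: y = set0 -> mmd (Gc_adj k) (Mid x i) (Mid y j).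
Proof.
move=> vx vy xy0.
apply: (mmd_of_diam Gc_diam_le2) => [a b ab | | | ]; first exact: ab.2.1.
- exact: Zstar_valid.
- exact: Zstar_valid.
split=> [|[|[|m]] // W]; first exact: Gc_walk2_disjoint.
- by case: (Mid_neq_disjoint vx xy0 (walk0_eq W)).
- by case/Gc_adj_MidP: (walk1_adj W) => _ _ _; rewrite xy0 eqxx.
Qed.

Lemma SR_vertex_valid x i : bvalid k (Mid x i) -> SR_vert (Mid x i).
Proof.
move=> vx; split; first exact: Zstar_valid.
have vc := valid_setC vx.
exists (Mid (~: x) 0); split; first exact: Zstar_valid.
by apply: mmd_disjoint => //; exact: setICr.
Qed.

Lemma SR_adj_disjoint x i y j : bvalid k (Mid x i) -> bvalid k (Mid y j) ->
  x :&: y = set0 -> SR_edge (Mid x i) (Mid y j).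
Proof.
move=> vx vy xy0; do 2 (split; first exact: SR_vertex_valid).
by split; [exact: Mid_neq_disjoint | exact: mmd_disjoint].
Qed.

Lemma SR_adj_same_chain x i j : bvalid k (Mid x i) -> bvalid k (Mid x j) -> i != j ->
  SR_edge (Mid x i) (Mid x j).
Proof.
move=> vi vj nij; do 2 (split; first exact: SR_vertex_valid).
by split; [case=> /eqP; rewrite (negbTE nij) | exact: mmd_same_chain].
Qed.

Lemma SR_walk3_setC x i y j : bvalid k (Mid x i) -> bvalid k (Mid y j) ->
  x :|: y = setT -> walk SR_edge (Mid x i) (Mid y j) 3.
Proof.
move=> vx vy xyT; have vcx := valid_setC vx; have vcy := valid_setC vy.
apply: walkS (SR_adj_disjoint vx vcx (setICr x)) _.
apply: walkS (walk1 (SR_adj_disjoint vcy vy _)); last by rewrite setIC setICr.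
by apply: SR_adj_disjoint; rewrite // -setCU xyT setCT.
Qed.

Lemma SR_walk2_setC x i y j : bvalid k (Mid x i) -> bvalid k (Mid y j) ->
  x :|: y != setT -> walk SR_edge (Mid x i) (Mid y j) 2.
Proof.
move=> vx vy xy_nT.
have vz : bvalid k (Mid (~: (x :|: y)) 0).
  apply: valid_Mid0; rewrite ?setC_eq0 // setC_eqT setU_eq0.
  by case: vx => /negbTE ->.
apply: walkS (walk1 (SR_adj_disjoint vz vy _)).
  by apply: SR_adj_disjoint; rewrite // setCU setIA setICr set0I.
by rewrite setCU -setIA [~: y :&: y]setIC setICr setI0.
Qed.

Lemma SR_walk_le3 x i y j : bvalid k (Mid x i) -> bvalid k (Mid y j) ->
  exists2 m, m <= 3 & walk SR_edge (Mid x i) (Mid y j) m.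
Proof.
move=> vx vy.
have [xy0 | xy_n0] := eqVneq (x :&: y) set0.
  by exists 1; last by apply: walk1; apply: SR_adj_disjoint.
have [yE | nxy] := eqVneq x y.
  subst y; have [<- | nij] := eqVneq i j; first by exists 0; last exact: walk0.
  by exists 1; last by apply: walk1; apply: SR_adj_same_chain.
have [xyT | xy_nT] := eqVneq (x :|: y) setT.
  by exists 3; last exact: SR_walk3_setC.
by exists 2; last exact: SR_walk2_setC.
Qed.

Lemma SR_vertex_exists : exists u, SR_vert u.
Proof.
pose a : 'I_n := Ordinal (leq_trans (isT : 0 < 3) n_gt2).
exists (Mid [set a] 0); apply/SR_vertex_valid/valid_Mid0.
- by apply/set0Pn; exists a; rewrite inE.
- by apply: small_set_neqT; rewrite cards1 (leq_trans _ n_gt2).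
Qed.

End BlowUp.

Theorem lemma3p18 (n : nat) (k : {set 'I_n} -> nat) :
  3 <= n ->
  (forall x : {set 'I_n}, x != set0 -> x != setT -> 0 < k x) ->
  connected_diam_le (SR_vertex (Zstar k) (Gc_adj k))
                    (SR_adj (Zstar k) (Gc_adj k)) 3.
Proof.
move=> n_gt2 k_gt0; split; first exact: SR_vertex_exists.
move=> u v [/Zstar_Mid [x [i [-> vx]]] _] [/Zstar_Mid [y [j [-> vy]]] _].
exact: SR_walk_le3.
Qed.
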